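(* Let $n>1$ be a natural number and $\Psi_n(t) = 1+t+\cdots+t^{n-1}$. Then $\operatorname{Discr}_\ast(\Psi_n(t)) = n^{n-2}$ and $\operatorname{Prod}_\ast(\Psi_n(t)) = n^{n-1}$; in particular $\operatorname{Discr}_\ast(\Psi_n(t))\cdot\operatorname{Prod}_\ast(\Psi_n(t)) = n^{n-2}\cdot n^{n-1}$.
   Context: For nonconstant $r(t)\in\mathbb{Z}[t]$ of degree $d$ with leading coefficient $a$, distinct roots $\lambda_1,\dots,\lambda_l\in\overline{\mathbb{Q}}$ with multiplicities $m_1,\dots,m_l$, and $m=\max m_i$: $\operatorname{Discr}_\ast(r(t)) := a^{1+2d^2}(m-1)!\prod_{1\le i\ne j\le l}(\lambda_i-\lambda_j)^m$ and $\operatorname{Prod}_\ast(r(t)) := a^{2d^3}\prod_{1\le i,j\le l,\ r(\lambda_i\lambda_j)\ne0}r(\lambda_i\lambda_j)$. *)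

From HB Require Import structures.
From mathcomp Require Import all_boot all_order all_algebra all_field.
Set Implicit Arguments. Unset Strict Implicit. Unset Printing Implicit Defensive.
Import Order.TTheory GRing.Theory Num.Theory.
Local Open Scope ring_scope.

(* Qbar is realised inside algC (algebraic complex numbers), which is an
   algebraically closed field of characteristic 0 containing all roots of
   integer polynomials. *)

Definition polyC_of (r : {poly int}) : {poly algC} := map_poly intr r.

(* The multiset of roots of r in algC (with multiplicity). *)
Definition rootsm (r : {poly int}) : seq algC :=
  sval (closed_field_poly_normal (polyC_of r)).

Definition droots (r : {poly int}) : seq algC := undup (rootsm r).

Definition maxmult (r : {poly int}) : nat :=
  \max_(z <- droots r) count_mem z (rootsm r).

Definition degr (r : {poly int}) : nat := (size r).-1.
Definition leadC (r : {poly int}) : algC := (lead_coef r)%:~R.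

Definition Discr_star (r : {poly int}) : algC :=
  leadC r ^+ (1 + 2 * (degr r) ^ 2) * ((maxmult r).-1`!)%:R *
  \prod_(i < size (droots r)) \prod_(j < size (droots r) | i != j)
     ((droots r)`_i - (droots r)`_j) ^+ maxmult r.

Definition Prod_star (r : {poly int}) : algC :=
  leadC r ^+ (2 * (degr r) ^ 3) *
  \prod_(i < size (droots r)) \prod_(j < size (droots r)
         | (polyC_of r).[(droots r)`_i * (droots r)`_j] != 0)
     (polyC_of r).[(droots r)`_i * (droots r)`_j].

Definition Psi (n : nat) : {poly int} := \sum_(i < n) 'X^i.

From HB Require Import structures.
From mathcomp Require Import all_boot all_order all_algebra all_field.
From mathcomp Require Import zify.
Import Order.TTheory GRing.Theory Num.Theory.
Local Open Scope ring_scope.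

(* Psi_n is monic and its complex roots are the n-th roots of unity other
   than 1, all simple, so a = 1 and m = 1.  Differentiating
   (t - 1) Psi_n(t) = t^n - 1 gives (x - 1) Psi_n'(x) = n x^(n-1) at every
   root x, while prod_(y <> x) (x - y) = Psi_n'(x); multiplying over x and
   using prod (x - 1) = (-1)^(n-1) Psi_n(1) = (-1)^(n-1) n and
   prod x = (-1)^(n-1) Psi_n(0) = (-1)^(n-1) yields n^(n-2).  For Prod_*,
   Psi_n(x y) vanishes unless x y = 1, so each root x contributes exactly
   Psi_n(1) = n. *)

Lemma prodr_const_seq (R : pzSemiRingType) (I : Type) (s : seq I) (c : R) :
  \prod_(i <- s) c = c ^+ size s.
Proof. by rewrite big_const_seq count_predT iter_mulr_1. Qed.

Section NthPairProducts.

Context {T : nmodType} {R : comPzSemiRingType}.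

Lemma prod_nth_pairs (s : seq T) (P : T -> T -> bool) (F : T -> T -> R) :
  \prod_(i < size s) \prod_(j < size s | P s`_i s`_j) F s`_i s`_j =
  \prod_(x <- s) \prod_(y <- s | P x y) F x y.
Proof.
rewrite (big_nth 0) big_mkord; apply: eq_bigr => i _.
by rewrite (big_nth 0) big_mkord.
Qed.

Lemma prod_nth_pairs_neq (s : seq T) (F : T -> T -> R) : uniq s ->
  \prod_(i < size s) \prod_(j < size s | i != j) F s`_i s`_j =
  \prod_(x <- s) \prod_(y <- s | y != x) F x y.
Proof.
move=> s_uniq; rewrite (big_nth 0) big_mkord; apply: eq_bigr => i _.
rewrite (big_nth 0) big_mkord; apply: eq_bigl => j.
by rewrite nth_uniq // eq_sym.
Qed.

End NthPairProducts.

Section ProdXsubC.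

Context {F : idomainType}.

Lemma prod_subC_horner (s : seq F) (a : F) :
  \prod_(x <- s) (x - a) = (-1) ^+ size s * (\prod_(x <- s) ('X - x%:P)).[a].
Proof.
rewrite horner_prod -prodr_const_seq -big_split /=.
by apply: eq_bigr => x _; rewrite hornerXsubC mulN1r opprB.
Qed.

Lemma deriv_prod_XsubC_at (s : seq F) (x : F) : uniq s -> x \in s ->
  (\prod_(y <- s) ('X - y%:P))^`().[x] = \prod_(y <- s | y != x) (x - y).
Proof.
move=> s_uniq xs; rewrite (bigD1_seq x) //= derivM derivXsubC mul1r.
rewrite hornerD hornerM hornerXsubC subrr mul0r addr0 horner_prod.
by apply: eq_bigr => y _; rewrite hornerXsubC.
Qed.

Lemma uniq_deriv_prod_XsubC (s : seq F) :
  {in s, forall x, (\prod_(y <- s) ('X - y%:P))^`().[x] != 0} -> uniq s.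
Proof.
elim: s => //= a t IHt; rewrite big_cons => deriv_neq0.
set q := \prod_(y <- t) ('X - y%:P).
have q_root x : x \in t -> q.[x] = 0.
  by move=> xt; apply/rootP; rewrite root_prod_XsubC.
have derivE x : (('X - a%:P) * q)^`().[x] = q.[x] + (x - a) * q^`().[x].
  by rewrite derivM derivXsubC mul1r hornerD hornerM hornerXsubC.
apply/andP; split.
  apply: contra (deriv_neq0 a (mem_head a t)) => at_.
  by rewrite derivE subrr mul0r addr0 q_root.
apply: IHt => x xt; have := deriv_neq0 x; rewrite in_cons xt orbT => /(_ isT).
by rewrite derivE q_root // add0r mulf_eq0 negb_or => /andP[].
Qed.

Lemma prod_root_differences (s : seq F) : uniq s ->
  \prod_(x <- s) \prod_(y <- s | y != x) (x - y) =
  \prod_(x <- s) (\prod_(y <- s) ('X - y%:P))^`().[x].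
Proof.
by move=> s_uniq; apply: eq_big_seq => x xs; rewrite deriv_prod_XsubC_at.
Qed.

End ProdXsubC.

Section Psi.

Variable n : nat.
Hypothesis n_gt0 : (0 < n)%N.

Local Notation P := (polyC_of (Psi n)).
Local Notation s := (rootsm (Psi n)).

Lemma polyC_of_Psi : P = \sum_(i < n) 'X^i.
Proof.
rewrite /polyC_of /Psi rmorph_sum; apply: eq_bigr => i _.
exact: map_polyXn.
Qed.

Lemma mulXsub1_Psi : ('X - 1) * P = 'X^n - 1.
Proof.
have := subrXX ('X : {poly algC}) 1 n; rewrite expr1n => ->.
rewrite polyC_of_Psi; congr (_ * _).
rewrite (reindex_inj rev_ord_inj) /=; apply: eq_bigr => i _.
by rewrite expr1n mulr1; congr ('X^_); lia.
Qed.

Lemma horner_Psi1 : P.[1] = n%:R.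
Proof.
rewrite polyC_of_Psi horner_sum.
under eq_bigr do rewrite hornerXn expr1n.
by rewrite sumr_const card_ord.
Qed.

Lemma horner_Psi0 : P.[0] = 1.
Proof.
rewrite polyC_of_Psi horner_sum (bigD1 (Ordinal n_gt0)) //= hornerXn expr0n /=.
rewrite big1 ?addr0 // => i; rewrite -val_eqE /= => /negPf i_neq0.
by rewrite hornerXn expr0n i_neq0.
Qed.

Lemma monic_Psi : P \is monic.
Proof.
rewrite -(monicMl _ (monicXsubC (1 : algC))) polyC1 mulXsub1_Psi.
by rewrite -polyC1 monicXnsubC.
Qed.

Lemma size_Psi : size P = n.
Proof.
have nz : P != 0 by apply: monic_neq0; exact: monic_Psi.
have := congr1 (fun p : {poly algC} => size p) mulXsub1_Psi.
rewrite -polyC1 size_XnsubC //.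
by rewrite size_mul ?polyXsubC_eq0 // size_XsubC; case.
Qed.

Lemma Psi_factor : P = \prod_(z <- s) ('X - z%:P).
Proof.
rewrite /rootsm; case: closed_field_poly_normal => r /= {1}->.
by rewrite (monicP monic_Psi) scale1r.
Qed.

Lemma mem_rootsm_Psi x : (x \in s) = root P x.
Proof. by rewrite Psi_factor root_prod_XsubC. Qed.

Lemma size_rootsm_Psi : size s = n.-1.
Proof.
by have := size_Psi; rewrite {1}Psi_factor size_prod_XsubC => /(congr1 predn).
Qed.

Lemma root_Psi x : root P x = (x ^+ n == 1) && (x != 1).
Proof.
have := congr1 (horner^~ x) mulXsub1_Psi; rewrite hornerM !hornerE => mulE.
apply/idP/andP => [Px | [/eqP xn x_neq1]].
  split; first by rewrite -subr_eq0 -mulE (rootP Px) mulr0.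
  by apply: contraTneq Px => ->; rewrite rootE horner_Psi1 pnatr_eq0 -lt0n.
apply/rootP; move/eqP: mulE; rewrite xn subrr mulf_eq0 subr_eq0.
by rewrite (negPf x_neq1) => /eqP.
Qed.

Lemma root_Psi_neq0 x : root P x -> x != 0.
Proof.
rewrite root_Psi => /andP[/eqP xn _].
have : x ^+ n != 0 by rewrite xn oner_neq0.
by rewrite expf_eq0 n_gt0.
Qed.

Lemma root_PsiV x : root P x -> root P x^-1.
Proof.
rewrite !root_Psi => /andP[/eqP xn x_neq1].
by rewrite exprVn xn invr1 eqxx invr_eq1.
Qed.

Lemma deriv_Psi_root x : root P x -> (x - 1) * P^`().[x] = n%:R * x ^+ n.-1.
Proof.
move=> /rootP Px; have := congr1 (fun p => p^`().[x]) mulXsub1_Psi.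
rewrite /= -polyC1 derivM !derivB derivX derivXn derivC !subr0 mul1r polyC1.
by rewrite hornerD hornerM Px add0r hornerMn hornerXn !hornerE mulr_natl.
Qed.

Lemma uniq_rootsm_Psi : uniq s.
Proof.
apply: uniq_deriv_prod_XsubC => x; rewrite -Psi_factor mem_rootsm_Psi => Px.
apply/eqP => deriv0; have /eqP := deriv_Psi_root _ Px.
rewrite deriv0 mulr0 eq_sym mulf_eq0 pnatr_eq0 expf_eq0 gtn_eqF //.
by rewrite (negPf (root_Psi_neq0 _ Px)) andbF.
Qed.

Lemma droots_Psi : droots (Psi n) = s.
Proof. by rewrite /droots undup_id // uniq_rootsm_Psi. Qed.

Lemma leadC_Psi : leadC (Psi n) = 1.
Proof.
rewrite /leadC -[RHS](monicP monic_Psi) /polyC_of lead_coef_map_inj //.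
exact: intr_inj.
Qed.

Lemma maxmult_Psi : (1 < n)%N -> maxmult (Psi n) = 1%N.
Proof.
move=> n_gt1; rewrite /maxmult droots_Psi.
have [x xs] : exists x, x \in s.
  by case: s size_rootsm_Psi => [|x t] /=; [lia | exists x; rewrite mem_head].
apply/eqP; rewrite eqn_leq; apply/andP; split.
  apply/bigmax_leqP_seq => y ys _.
  by rewrite count_uniq_mem ?uniq_rootsm_Psi ?ys.
have := leq_bigmax_seq (F := fun z => count_mem z s) x xs isT.
by rewrite count_uniq_mem ?uniq_rootsm_Psi ?xs.
Qed.

Lemma prod_root_differences_Psi : (1 < n)%N ->
  \prod_(x <- s) \prod_(y <- s | y != x) (x - y) = (n ^ (n - 2))%:R.
Proof.
move=> n_gt1; rewrite prod_root_differences ?uniq_rootsm_Psi // -Psi_factor.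
set D := \prod_(x <- s) _.
have prod_sub1 : \prod_(x <- s) (x - 1) = (-1) ^+ n.-1 * n%:R.
  by rewrite prod_subC_horner -Psi_factor horner_Psi1 size_rootsm_Psi.
have prod_roots : \prod_(x <- s) x = (-1) ^+ n.-1.
  have := prod_subC_horner s 0; rewrite -Psi_factor horner_Psi0 mulr1.
  by rewrite size_rootsm_Psi; under eq_bigr do rewrite subr0.
have : \prod_(x <- s) ((x - 1) * P^`().[x]) = \prod_(x <- s) (n%:R * x ^+ n.-1).
  by apply: eq_big_seq => x xs; rewrite deriv_Psi_root // -mem_rootsm_Psi.
rewrite big_split [RHS]big_split /= prod_sub1 prodrXl prod_roots.
have sign_sq : (-1) ^+ (n.-1 * n.-1) = (-1) ^+ n.-1 :> algC.
  by rewrite -signr_odd oddM andbb signr_odd.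
rewrite prodr_const_seq size_rootsm_Psi -exprM sign_sq -/D -mulrA [RHS]mulrC.
move=> /(can_inj (signrMK _)) nD.
have n_neq0 : n%:R != 0 :> algC by rewrite pnatr_eq0 gtn_eqF.
apply: (mulfI n_neq0); rewrite nD natrX -exprS; congr (_ ^+ _); lia.
Qed.

Lemma Psi_root_mul_neq0 x y : root P x -> root P y ->
  (P.[x * y] != 0) = (y == x^-1).
Proof.
move=> Px Py; have x_neq0 := root_Psi_neq0 _ Px.
move: Px Py; rewrite -rootE !root_Psi => /andP[/eqP xn _] /andP[/eqP yn _].
rewrite exprMn xn yn mul1r eqxx /= negbK.
apply/eqP/eqP => [xy1 | ->]; last exact: mulfV.
by rewrite -(mulKf x_neq0 y) xy1 mulr1.
Qed.

Lemma prod_Psi_root_products :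
  \prod_(x <- s) \prod_(y <- s | P.[x * y] != 0) P.[x * y] = (n ^ (n - 1))%:R.
Proof.
rewrite natrX subn1 -size_rootsm_Psi -prodr_const_seq.
apply: eq_big_seq => x; rewrite mem_rootsm_Psi => Px.
have xVs : x^-1 \in s by rewrite mem_rootsm_Psi root_PsiV.
rewrite big_seq_cond (eq_bigl (pred1 x^-1)) => [|y].
  rewrite -big_filter filter_pred1_uniq ?uniq_rootsm_Psi // big_seq1.
  by rewrite mulfV ?root_Psi_neq0 ?horner_Psi1.
apply/andP/eqP => [[ys] | ->]; last by rewrite Psi_root_mul_neq0 ?root_PsiV.
by rewrite mem_rootsm_Psi in ys; rewrite Psi_root_mul_neq0 // => /eqP.
Qed.

End Psi.

Theorem proposition4p12 (n : nat) (hn : (1 < n)%N) :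
  Discr_star (Psi n) = (n ^ (n - 2))%:R /\
  Prod_star (Psi n) = (n ^ (n - 1))%:R /\
  Discr_star (Psi n) * Prod_star (Psi n) = (n ^ (n - 2))%:R * (n ^ (n - 1))%:R.
Proof.
have n_gt0 : (0 < n)%N := ltnW hn.
have discr : Discr_star (Psi n) = (n ^ (n - 2))%:R.
  rewrite /Discr_star droots_Psi // leadC_Psi // maxmult_Psi // expr1n !mul1r.
  rewrite (prod_nth_pairs_neq _ (fun x y => x - y)) ?uniq_rootsm_Psi //.
  exact: prod_root_differences_Psi.
have prod : Prod_star (Psi n) = (n ^ (n - 1))%:R.
  rewrite /Prod_star droots_Psi // leadC_Psi // expr1n mul1r.
  set p := polyC_of (Psi n).
  rewrite (prod_nth_pairs _ (fun x y => p.[x * y] != 0) (fun x y => p.[x * y])).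
  exact: prod_Psi_root_products.
by rewrite discr prod.
Qed.
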